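(* The price of anarchy of CC-MAR is unbounded: there exists an instance having a Nash equilibrium with positive total cost while some strategy profile has total cost $0$ (so the ratio between the worst Nash equilibrium cost and the optimal cost is not bounded by any constant).
   Context: A mixed graph $G=(V,E,A)$ has undirected edges $E\subseteq\binom{V}{2}$ with positive integer weights $w_e$ and arcs $A\subseteq V\times V$. A path is a sequence of pairwise distinct vertices in which consecutive vertices are joined by an edge or by an arc in the forward direction. A CC-MAR instance is $(G,\mathcal{T})$ with $\mathcal{T}$ a multiset of $k$ pairs $(s_i,t_i)$, each connected by some path. A strategy profile $\mathcal{P}=\{P_1,\dots,P_k\}$ consists of $s_i$-$t_i$ paths. For $\{u,v\}\in E$, $x_{uv}$ is the number of paths traversing it from $u$ to $v$. Agent $i$'s cost is $\sum w_{uv}x_{vu}$ over edges $\{u,v\}$ traversed by $P_i$ from $u$ to $v$; total cost is $\mathrm{cost}(\mathcal{P})=\sum_{\{u,v\}\in E}w_{uv}x_{uv}x_{vu}$. A Nash equilibrium is a profile where no agent can strictly lower its own cost by unilaterally changing its path. The price of anarchy is the supremum over instances of the ratio of the maximum total cost of a Nash equilibrium to the minimum total cost of any profile. *)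

From mathcomp Require Import all_boot all_order.
Set Implicit Arguments. Unset Strict Implicit. Unset Printing Implicit Defensive.

Section CCMAR.
Variable n : nat.
Notation V := 'I_n.

(* A mixed graph G = (V, E, A) with edge weights:
   [edge : rel V] is the (symmetric, irreflexive) undirected edge relation,
   [arc : rel V] the arc relation ((u,v) is an arc iff arc u v),
   [w : V -> V -> nat] the edge weights (meaningful on edges only). *)
Record mixed_graph := MixedGraph {
  edge : rel V;
  arc : rel V;
  w : V -> V -> nat
}.

Variable G : mixed_graph.

(* We additionally
   require that no pair of vertices is joined both by an edge and an arc,
   so that each step of a path unambiguously traverses an edge or an arc. *)
Definition wf_graph : Prop :=
  [/\ forall u v, edge G u v = edge G v u,
      forall u, ~~ edge G u u,
      forall u v, edge G u v -> 0 < w G u v,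
      forall u v, edge G u v -> w G u v = w G v u &
      forall u v, edge G u v -> ~~ arc G u v].

Definition steps (p : seq V) : seq (V * V) := zip p (behead p).

Definition step_ok (uv : V * V) : bool := edge G uv.1 uv.2 || arc G uv.1 uv.2.

Definition is_path (s t : V) (p : seq V) : bool :=
  [&& p != [::], head s p == s, last s p == t, uniq p & all step_ok (steps p)].

Variable k : nat.
Definition profile (T : 'I_k -> V * V) (P : 'I_k -> seq V) : Prop :=
  forall i, is_path (T i).1 (T i).2 (P i).

Definition traverses (p : seq V) (u v : V) : bool :=
  edge G u v && ((u, v) \in steps p).

Definition xflow (P : 'I_k -> seq V) (u v : V) : nat :=
  #|[set i : 'I_k | traverses (P i) u v]|.

Definition agent_cost (P : 'I_k -> seq V) (i : 'I_k) : nat :=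
  \sum_(uv <- steps (P i) | edge G uv.1 uv.2) w G uv.1 uv.2 * xflow P uv.2 uv.1.

(* total cost: sum over unordered edges {u,v} (enumerated with u < v) *)
Definition total_cost (P : 'I_k -> seq V) : nat :=
  \sum_(u : V) \sum_(v : V | (u < v)%N && edge G u v)
     w G u v * xflow P u v * xflow P v u.

Definition deviate (P : 'I_k -> seq V) (i : 'I_k) (Q : seq V) : 'I_k -> seq V :=
  fun j => if j == i then Q else P j.

Definition nash_eq (T : 'I_k -> V * V) (P : 'I_k -> seq V) : Prop :=
  profile T P /\
  forall i Q, is_path (T i).1 (T i).2 Q ->
    agent_cost P i <= agent_cost (deviate P i Q) i.

End CCMAR.

From Pilot Require Import Defs.
From mathcomp Require Import all_boot all_order.
Set Implicit Arguments. Unset Strict Implicit. Unset Printing Implicit Defensive.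

(* Take vertices 0, 1, 2, 3 with unit-weight edges {0,1}, {1,2} and arcs
   0 -> 2, 1 -> 3, 3 -> 2, and three agents travelling 0 -> 1, 1 -> 0 and
   1 -> 2.  If everybody takes the direct edge, edge {0,1} is used in both
   directions and the total cost is 1.  This is a Nash equilibrium: no arc
   enters 0 or 1, so any route of the first two agents ends with an edge
   whose opposite direction is used by another agent, and costs at least 1.
   Yet routing the first agent along 0 -> 2 -> 1 and the third along
   1 -> 3 -> 2 makes every edge one-way, for a total cost of 0. *)

Lemma val_index_enum_ord n : map val (index_enum 'I_n) = iota 0 n.
Proof. by rewrite [index_enum _]unlock -enumT val_enum_ord. Qed.

Section AgentCost.
Variables (n k : nat) (G : mixed_graph n).
Implicit Types (P : 'I_k -> seq 'I_n) (p Q : seq 'I_n) (i j : 'I_k).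

Lemma steps_rcons x p y :
  steps (rcons (x :: p) y) = rcons (steps (x :: p)) (last x p, y).
Proof. by elim: p x => [|z p IHp] x //=; rewrite -IHp. Qed.

Lemma path_last_step s t Q : s != t -> is_path G s t Q ->
  exists2 u, (u, t) \in steps Q & step_ok G (u, t).
Proof.
move=> st /and5P[_ /eqP + /eqP + _ /allP]; move: st.
case/lastP: Q => [|Q t'] /= st; first by move=> _ ts; rewrite ts eqxx in st.
rewrite last_rcons => + tt'; rewrite -{}tt' in st *.
case: Q => [|x Q] /= hdQ okQ; first by rewrite hdQ eqxx in st.
have last_step : (last x Q, t') \in steps (rcons (x :: Q) t').
  by rewrite steps_rcons mem_rcons mem_head.
by exists (last x Q) => //; apply: okQ.
Qed.

Lemma step_cost_le_agent_cost P i u v : edge G u v -> (u, v) \in steps (P i) ->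
  w G u v * xflow G P v u <= agent_cost G P i.
Proof.
by move=> uv_edge uv_step; rewrite /agent_cost (big_rem _ uv_step) /= uv_edge leq_addr.
Qed.

Lemma xflow_deviate_gt0 P i Q j u v : j != i -> traverses G (P j) u v ->
  0 < xflow G (deviate P i Q) u v.
Proof.
by move=> ji tr; apply/card_gt0P; exists j; rewrite inE /deviate (negbTE ji).
Qed.

Lemma deviation_cost_gt0 P i s t Q : wf_graph G -> s != t -> is_path G s t Q ->
  (forall u, ~~ Defs.arc G u t) ->
  (forall u, edge G u t -> exists2 j, j != i & traverses G (P j) t u) ->
  0 < agent_cost G (deviate P i Q) i.
Proof.
move=> [_ _ w_gt0 _ _] st pQ no_arc used.
have [u uQ /orP[ut|]] := path_last_step st pQ; last by rewrite (negbTE (no_arc u)).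
have [j ji tr] := used u ut.
have Qi : deviate P i Q i = Q by rewrite /deviate eqxx.
rewrite -Qi in uQ; apply: leq_trans (step_cost_le_agent_cost ut uQ).
by rewrite muln_gt0 w_gt0 // (xflow_deviate_gt0 _ ji tr).
Qed.

Lemma xflow_sum P u v : xflow G P u v = \sum_(i < k) traverses G (P i) u v.
Proof.
rewrite /xflow -sum1dep_card big_mkcond.
by apply: eq_bigr => i _; case: traverses.
Qed.

End AgentCost.

Definition v0 : 'I_4 := @Ordinal 4 0 isT.
Definition v1 : 'I_4 := @Ordinal 4 1 isT.
Definition v2 : 'I_4 := @Ordinal 4 2 isT.
Definition v3 : 'I_4 := @Ordinal 4 3 isT.

Definition a0 : 'I_3 := @Ordinal 3 0 isT.
Definition a1 : 'I_3 := @Ordinal 3 1 isT.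
Definition a2 : 'I_3 := @Ordinal 3 2 isT.

(* The library enumeration of ['I_n] is built with [insub] and does not
   reduce, so cost computations first rewrite it to an explicit list. *)
Lemma index_enum_ord4 : index_enum 'I_4 = [:: v0; v1; v2; v3].
Proof. by apply: (inj_map val_inj); rewrite val_index_enum_ord. Qed.

Lemma index_enum_ord3 : index_enum 'I_3 = [:: a0; a1; a2].
Proof. by apply: (inj_map val_inj); rewrite val_index_enum_ord. Qed.

Definition poa_graph : mixed_graph 4 := {|
  edge := fun u v => (val u, val v) \in [:: (0, 1); (1, 0); (1, 2); (2, 1)];
  Defs.arc := fun u v => (val u, val v) \in [:: (0, 2); (1, 3); (3, 2)];
  w := fun _ _ => 1 |}.

Definition poa_pairs (i : 'I_3) : 'I_4 * 'I_4 :=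
  match val i with 0 => (v0, v1) | 1 => (v1, v0) | _ => (v1, v2) end.

Definition nash_profile (i : 'I_3) : seq 'I_4 :=
  match val i with 0 => [:: v0; v1] | 1 => [:: v1; v0] | _ => [:: v1; v2] end.

Definition opt_profile (i : 'I_3) : seq 'I_4 :=
  match val i with 0 => [:: v0; v2; v1] | 1 => [:: v1; v0] | _ => [:: v1; v3; v2] end.

Lemma wf_poa_graph : wf_graph poa_graph.
Proof. by split=> // [] [[|[|[|[|?]]]] ?] // [[|[|[|[|?]]]] ?]. Qed.

Lemma profile_opt_profile : profile poa_graph poa_pairs opt_profile.
Proof. by case=> [[|[|[|?]]] ?]. Qed.

Lemma total_cost_nash_profile : total_cost poa_graph nash_profile = 1.
Proof.
rewrite /total_cost; under eq_bigr do under eq_bigr do rewrite !xflow_sum.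
by rewrite index_enum_ord4 index_enum_ord3 unlock.
Qed.

Lemma total_cost_opt_profile : total_cost poa_graph opt_profile = 0.
Proof.
rewrite /total_cost; under eq_bigr do under eq_bigr do rewrite !xflow_sum.
by rewrite index_enum_ord4 index_enum_ord3 unlock.
Qed.

Lemma agent_cost_nash_profile i : agent_cost poa_graph nash_profile i = (val i < 2).
Proof.
rewrite /agent_cost; under eq_bigr do rewrite xflow_sum.
by rewrite index_enum_ord3 unlock; case: i => [[|[|[|]]] ?].
Qed.

Lemma nash_eq_nash_profile : nash_eq poa_graph poa_pairs nash_profile.
Proof.
split=> [|i Q pQ]; first by case=> [[|[|[|?]]] ?].
rewrite agent_cost_nash_profile.
case: i pQ => [[|[|[|//]]] Hi] pQ //=;
  apply: (deviation_cost_gt0 wf_poa_graph _ pQ) => //.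
- by case=> [[|[|[|[|?]]]] ?].
- by case=> [[|[|[|[|?]]]] ?] // _; [exists a1 | exists a2].
- by case=> [[|[|[|[|?]]]] ?].
- by case=> [[|[|[|[|?]]]] ?] // _; exists a0.
Qed.

Theorem mainTheorem3 :
  exists (n : nat) (G : mixed_graph n) (k : nat) (T : 'I_k -> 'I_n * 'I_n)
         (P Popt : 'I_k -> seq 'I_n),
    [/\ wf_graph G,
        nash_eq G T P,
        0 < total_cost G P,
        profile G T Popt &
        total_cost G Popt = 0].
Proof.
exists 4, poa_graph, 3, poa_pairs, nash_profile, opt_profile.
split.
- exact: wf_poa_graph.
- exact: nash_eq_nash_profile.
- by rewrite total_cost_nash_profile.
- exact: profile_opt_profile.
- exact: total_cost_opt_profile.
Qed.
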